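(* Let $g=\begin{pmatrix}a&b\\c&d\end{pmatrix}\in\mathrm{SL}_2(\mathbb R)$ with $g\notin s$. Then $g\in S$ if and only if $|ad|+|bc|=1$. If $g\notin S$, then there exist uniquely determined $y_1,y_2>0$, $\delta_1,\delta_2\in\{0,1\}$, $v>0$ and a sign $\pm$ such that $$g=\pm\begin{pmatrix}y_1^{1/2}&0\\0&y_1^{-1/2}\end{pmatrix}\omega^{\delta_1}\begin{pmatrix}\cosh v&\sinh v\\ \sinh v&\cosh v\end{pmatrix}\omega^{\delta_2}\begin{pmatrix}y_2^{1/2}&0\\0&y_2^{-1/2}\end{pmatrix},$$ and concretely $y_1=|ab/(cd)|^{1/2}$, $y_2=|ac/(bd)|^{1/2}$, $v=\log(|ad|^{1/2}+|cb|^{1/2})$, and $(\delta_1,\delta_2)=(0,0),(1,1),(1,0),(0,1)$ according as the sign pattern of $(a,b,c,d)$ is $\pm(+,+,+,+)$, $\pm(+,-,-,+)$, $\pm(+,+,-,-)$, $\pm(+,-,+,-)$ respectively.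
   Context: $\omega=\begin{pmatrix}0&-1\\1&0\end{pmatrix}$. $s=\{g\in\mathrm{SL}_2(\mathbb R): gz_1=z_2\text{ for some }z_1,z_2\in\{0,i\infty\}\}$, which equals $\{g: abcd=0\}$; $S=s\cup\{g\in\mathrm{SL}_2(\mathbb R): g(iy_1)=iy_2\text{ for some }y_1,y_2>0\}$. *)

From Stdlib Require Import Reals.
From Coquelicot Require Import Coquelicot.
Open Scope R_scope.

Record mat2 := M2 { e11 : R; e12 : R; e21 : R; e22 : R }.

Definition mmul (g h : mat2) : mat2 :=
  M2 (e11 g * e11 h + e12 g * e21 h) (e11 g * e12 h + e12 g * e22 h)
     (e21 g * e11 h + e22 g * e21 h) (e21 g * e12 h + e22 g * e22 h).

Definition mscale (k : R) (g : mat2) : mat2 :=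
  M2 (k * e11 g) (k * e12 g) (k * e21 g) (k * e22 g).

Definition det2 (g : mat2) : R := e11 g * e22 g - e12 g * e21 g.

Definition SL2 (g : mat2) : Prop := det2 g = 1.

Definition id2 : mat2 := M2 1 0 0 1.
Definition omega : mat2 := M2 0 (-1) 1 0.
Definition omega_pow (delta : bool) : mat2 := if delta then omega else id2.

Definition diag_y (y : R) : mat2 := M2 (sqrt y) 0 0 (/ sqrt y).
Definition hyp (v : R) : mat2 := M2 (cosh v) (sinh v) (sinh v) (cosh v).

Definition mobius (g : mat2) (z : C) : C :=
  ((RtoC (e11 g) * z + RtoC (e12 g)) / (RtoC (e21 g) * z + RtoC (e22 g)))%C.

(* s = {g : g z1 = z2 for some z1,z2 in {0, i oo}} = {g : abcd = 0} (as stated in the context) *)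
Definition in_s (g : mat2) : Prop := e11 g * e12 g * e21 g * e22 g = 0.

Definition in_S (g : mat2) : Prop :=
  in_s g \/ exists y1 y2 : R, 0 < y1 /\ 0 < y2 /\
    mobius g (RtoC y1 * Ci)%C = (RtoC y2 * Ci)%C.

Definition decomposition (g : mat2) (y1 y2 : R) (d1 d2 : bool) (v eps : R) : Prop :=
  0 < y1 /\ 0 < y2 /\ 0 < v /\ (eps = 1 \/ eps = -1) /\
  g = mscale eps (mmul (diag_y y1) (mmul (omega_pow d1)
         (mmul (hyp v) (mmul (omega_pow d2) (diag_y y2))))).

From Stdlib Require Import Reals Lra Psatz.
From Coquelicot Require Import Coquelicot.
Open Scope R_scope.

(* The real part of g(iy) is (ac y^2 + bd) / (d^2 + c^2 y^2), so g maps some iy1 to some iy2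
   iff ac.bd = ad.bc < 0, which under ad - bc = 1 means |ad| + |bc| = 1.  Otherwise ad and bc
   have the same sign.  Multiplying out, the decomposition with parameters (y1, y2, d1, d2, v, eps)
   has entries of moduli sqrt(y1 y2) P, sqrt(y1/y2) Q, sqrt(y2/y1) Q, P/sqrt(y1 y2), where
   {P, Q} = {cosh v, sinh v} with P = cosh v iff d1 = d2, and signs eps(-1)^d1, eps(-1)^(d1+d2),
   eps, eps(-1)^d2.  So the signs of ac, ab and a fix d1, d2 and eps, the moduli fix
   y1^2 = |ab/cd|, y2^2 = |ac/bd| and e^v = P + Q = sqrt|ad| + sqrt|bc|; conversely every sign
   pattern with abcd > 0 and all such moduli occur. *)

Definition sgnb (b : bool) : R := if b then -1 else 1.

Lemma sgnb_sqr b : sgnb b * sgnb b = 1.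
Proof. destruct b; cbn; ring. Qed.

Lemma exists_sgnb x : x <> 0 -> exists b, 0 < x * sgnb b.
Proof.
  intros Hx. destruct (Rlt_or_le 0 x).
  - exists false; cbn; lra.
  - exists true; cbn; lra.
Qed.

Lemma sgnb_false_of_pos x b : 0 < x * sgnb b -> 0 < x -> b = false.
Proof. destruct b; cbn; intros; [lra | reflexivity]. Qed.

Lemma sgnb_true_of_neg x b : 0 < x * sgnb b -> x < 0 -> b = true.
Proof. destruct b; cbn; intros; [reflexivity | lra]. Qed.

Lemma sgnb_unique x b b' : 0 < x * sgnb b -> 0 < x * sgnb b' -> b = b'.
Proof.
  intros H H'. destruct (Rlt_or_le 0 x).
  - now rewrite (sgnb_false_of_pos x b), (sgnb_false_of_pos x b').
  - assert (x <> 0) by (intros ->; lra).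
    rewrite (sgnb_true_of_neg x b), (sgnb_true_of_neg x b'); auto; lra.
Qed.

Lemma unit_sign_unique x e e' : (e = 1 \/ e = -1) -> (e' = 1 \/ e' = -1) ->
  0 < x * e -> 0 < x * e' -> e = e'.
Proof. intros [-> | ->] [-> | ->]; lra. Qed.

Lemma Rabs_unit e : e = 1 \/ e = -1 -> Rabs e = 1.
Proof. intros [-> | ->]; split_Rabs; lra. Qed.

Lemma Rabs_sgnb b : Rabs (sgnb b) = 1.
Proof. apply Rabs_unit. destruct b; cbn; auto. Qed.

Lemma pos_of_mul_pos x y : 0 < x * y -> 0 < y -> 0 < x.
Proof. intros Hxy Hy. nra. Qed.

Lemma Rabs_add_Rabs_eq_iff x y : x * y <> 0 -> (Rabs x + Rabs y = Rabs (x - y) <-> x * y < 0).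
Proof. intros H. split_Rabs; split; intros; nra. Qed.

Lemma mobius_imag_axis a b c d y : d <> 0 ->
  mobius (M2 a b c d) (RtoC y * Ci)%C =
  ((a * c * y * y + b * d) / (d * d + c * c * y * y),
   (a * d - b * c) * y / (d * d + c * c * y * y)).
Proof.
  intros Hd. assert (0 < d * d + c * c * y * y) by nra.
  unfold mobius, Cdiv, Cmult, Cinv, Cplus, RtoC, Ci; cbn.
  f_equal; field; lra.
Qed.

Lemma maps_imag_axis_iff a b c d : a * d - b * c = 1 -> a * b * c * d <> 0 ->
  (exists y1 y2, 0 < y1 /\ 0 < y2 /\
     mobius (M2 a b c d) (RtoC y1 * Ci)%C = (RtoC y2 * Ci)%C) <->
  a * d * (b * c) < 0.
Proof.
  intros Hdet Habcd.
  assert (a <> 0 /\ c <> 0 /\ d <> 0) as (Ha & Hc & Hd).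
  { repeat split; intros ->; apply Habcd; ring. }
  assert (Hac : a * c <> 0) by (apply Rmult_integral_contrapositive; auto).
  split.
  - intros (y & y' & Hy & _ & E).
    rewrite mobius_imag_axis in E by exact Hd.
    apply (f_equal fst) in E. cbn in E.
    assert (Hre : a * c * y * y + b * d = 0).
    { assert (0 < d * d + c * c * y * y) by nra.
      apply Rmult_eq_reg_r with (/ (d * d + c * c * y * y)); [| apply Rinv_neq_0_compat; lra].
      unfold Rdiv in E. rewrite Rmult_0_l, E. lra. }
    replace (a * d * (b * c)) with (- ((a * c * y) * (a * c * y))) by nra.
    nra.
  - intros Hneg.
    assert (Hr : 0 < - (b * d) / (a * c)).
    { replace (- (b * d) / (a * c)) with (- (a * c * (b * d)) / ((a * c) * (a * c)))
        by (field; auto).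
      apply Rdiv_lt_0_compat; nra. }
    set (y := sqrt (- (b * d) / (a * c))).
    assert (Hy : 0 < y) by (apply sqrt_lt_R0; exact Hr).
    assert (Eyy : y * y = - (b * d) / (a * c)) by (apply sqrt_sqrt; lra).
    clearbody y.
    assert (HD : 0 < d * d + c * c * y * y) by nra.
    exists y, (y / (d * d + c * c * y * y)).
    split; [exact Hy | split; [apply Rdiv_lt_0_compat; lra |]].
    rewrite mobius_imag_axis, Hdet by exact Hd.
    unfold RtoC, Ci, Cmult; cbn.
    f_equal.
    + replace (a * c * y * y + b * d) with 0.
      * field; lra.
      * replace (a * c * y * y) with (a * c * (y * y)) by ring.
        rewrite Eyy. field. auto.
    + field; lra.
Qed.

Lemma in_S_iff a b c d : a * d - b * c = 1 -> a * b * c * d <> 0 ->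
  (in_S (M2 a b c d) <-> a * d * (b * c) < 0).
Proof.
  intros Hdet Habcd. unfold in_S, in_s; cbn.
  rewrite <- maps_imag_axis_iff by assumption. tauto.
Qed.

Lemma cosh_sinh_pos v : 0 < v -> 0 < cosh v /\ 0 < sinh v.
Proof.
  intros Hv. split.
  - unfold cosh. pose proof (exp_pos v). pose proof (exp_pos (- v)). lra.
  - rewrite <- sinh_0. now apply sinh_lt.
Qed.

Lemma cosh_plus_sinh v : cosh v + sinh v = exp v.
Proof. unfold cosh, sinh. field. Qed.

Lemma exists_cosh_sinh C S : 0 < C -> 0 < S -> C * C - S * S = 1 ->
  exists v, 0 < v /\ cosh v = C /\ sinh v = S.
Proof.
  intros HC HS H.
  assert (Hinv : / (C + S) = C - S).
  { apply Rmult_eq_reg_l with (C + S); [| lra]. rewrite Rinv_r by lra. nra. }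
  exists (ln (C + S)). unfold cosh, sinh.
  rewrite exp_Ropp, exp_ln, Hinv by lra.
  repeat split; try lra.
  rewrite <- ln_1. apply ln_increasing; nra.
Qed.

Definition twist_diag (d1 d2 : bool) (v : R) : R :=
  if Bool.eqb d1 d2 then cosh v else sinh v.
Definition twist_antidiag (d1 d2 : bool) (v : R) : R :=
  if Bool.eqb d1 d2 then sinh v else cosh v.

Lemma twist_pos d1 d2 v : 0 < v -> 0 < twist_diag d1 d2 v /\ 0 < twist_antidiag d1 d2 v.
Proof.
  intros Hv. destruct (cosh_sinh_pos v Hv).
  unfold twist_diag, twist_antidiag. destruct (Bool.eqb d1 d2); tauto.
Qed.

Lemma twist_sum d1 d2 v : twist_diag d1 d2 v + twist_antidiag d1 d2 v = exp v.
Proof.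
  rewrite <- cosh_plus_sinh. unfold twist_diag, twist_antidiag.
  destruct (Bool.eqb d1 d2); ring.
Qed.

Lemma exists_twist d1 d2 P Q : 0 < P -> 0 < Q -> sgnb d1 * sgnb d2 * (P * P - Q * Q) = 1 ->
  exists v, 0 < v /\ twist_diag d1 d2 v = P /\ twist_antidiag d1 d2 v = Q.
Proof.
  intros HP HQ H. unfold twist_diag, twist_antidiag.
  destruct d1, d2; cbn in *.
  1,4: now apply exists_cosh_sinh; lra.
  all: destruct (exists_cosh_sinh Q P) as (v & Hv & Hc & Hs); try lra.
  all: now exists v.
Qed.

Lemma decomposition_product y1 y2 d1 d2 v eps :
  mscale eps (mmul (diag_y y1) (mmul (omega_pow d1)
    (mmul (hyp v) (mmul (omega_pow d2) (diag_y y2))))) =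
  M2 (eps * sgnb d1 * (sqrt y1 * sqrt y2 * twist_diag d1 d2 v))
     (eps * sgnb d1 * sgnb d2 * (sqrt y1 / sqrt y2 * twist_antidiag d1 d2 v))
     (eps * (sqrt y2 / sqrt y1 * twist_antidiag d1 d2 v))
     (eps * sgnb d2 * (twist_diag d1 d2 v / sqrt y1 / sqrt y2)).
Proof.
  unfold mscale, mmul, diag_y, omega_pow, omega, id2, hyp, twist_diag, twist_antidiag.
  destruct d1, d2; cbn; f_equal; unfold Rdiv; ring.
Qed.

Section DecompositionInvariants.

Context {a b c d y1 y2 v eps : R} {d1 d2 : bool}.
Hypothesis Hdec : decomposition (M2 a b c d) y1 y2 d1 d2 v eps.

Let s1 := sqrt y1.
Let s2 := sqrt y2.
Let P := twist_diag d1 d2 v.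
Let Q := twist_antidiag d1 d2 v.

Lemma decomposition_entries :
  0 < s1 /\ 0 < s2 /\ 0 < P /\ 0 < Q /\ (eps = 1 \/ eps = -1) /\
  a = eps * sgnb d1 * (s1 * s2 * P) /\ b = eps * sgnb d1 * sgnb d2 * (s1 / s2 * Q) /\
  c = eps * (s2 / s1 * Q) /\ d = eps * sgnb d2 * (P / s1 / s2).
Proof.
  destruct Hdec as (Hy1 & Hy2 & Hv & Heps & E).
  rewrite decomposition_product in E. injection E as Ea Eb Ec Ed.
  destruct (twist_pos d1 d2 v Hv).
  repeat split; try assumption; apply sqrt_lt_R0; assumption.
Qed.

Lemma decomposition_Rabs :
  Rabs a = s1 * s2 * P /\ Rabs b = s1 / s2 * Q /\
  Rabs c = s2 / s1 * Q /\ Rabs d = P / s1 / s2.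
Proof.
  destruct decomposition_entries as (Hs1 & Hs2 & HP & HQ & Heps & -> & -> & -> & ->).
  rewrite !Rabs_mult, !Rabs_sgnb, Rabs_unit by exact Heps.
  assert (0 < s1 / s2) by (apply Rdiv_lt_0_compat; lra).
  assert (0 < s2 / s1) by (apply Rdiv_lt_0_compat; lra).
  assert (0 < P / s1 / s2) by (repeat apply Rdiv_lt_0_compat; lra).
  rewrite !Rabs_pos_eq by nra. repeat split; ring.
Qed.

Lemma decomposition_y1 : y1 = sqrt (Rabs (a * b / (c * d))).
Proof.
  destruct decomposition_entries as (Hs1 & Hs2 & HP & HQ & _).
  destruct decomposition_Rabs as (Ea & Eb & Ec & Ed).
  unfold Rdiv. rewrite Rabs_mult, Rabs_inv, !Rabs_mult, Ea, Eb, Ec, Ed.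
  replace (_ * _ * _) with ((s1 * s1) * (s1 * s1)) by (field; repeat split; lra).
  destruct Hdec as (Hy1 & _). unfold s1. rewrite sqrt_sqrt by lra.
  symmetry. apply sqrt_square. lra.
Qed.

Lemma decomposition_y2 : y2 = sqrt (Rabs (a * c / (b * d))).
Proof.
  destruct decomposition_entries as (Hs1 & Hs2 & HP & HQ & _).
  destruct decomposition_Rabs as (Ea & Eb & Ec & Ed).
  unfold Rdiv. rewrite Rabs_mult, Rabs_inv, !Rabs_mult, Ea, Eb, Ec, Ed.
  replace (_ * _ * _) with ((s2 * s2) * (s2 * s2)) by (field; repeat split; lra).
  destruct Hdec as (_ & Hy2 & _). unfold s2. rewrite sqrt_sqrt by lra.
  symmetry. apply sqrt_square. lra.
Qed.

Lemma decomposition_v : v = ln (sqrt (Rabs (a * d)) + sqrt (Rabs (c * b))).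
Proof.
  destruct decomposition_entries as (Hs1 & Hs2 & HP & HQ & _).
  destruct decomposition_Rabs as (Ea & Eb & Ec & Ed).
  rewrite !Rabs_mult, Ea, Eb, Ec, Ed.
  replace (_ * _ * (_ / _ / _)) with (P * P) by (field; lra).
  replace (_ / _ * _ * (_ / _ * _)) with (Q * Q) by (field; lra).
  rewrite !sqrt_square by lra. unfold P, Q. now rewrite twist_sum, ln_exp.
Qed.

Lemma decomposition_signs :
  0 < a * c * sgnb d1 /\ 0 < a * b * sgnb d2 /\ 0 < a * sgnb d1 * eps.
Proof.
  destruct decomposition_entries as (Hs1 & Hs2 & HP & HQ & Heps & -> & -> & -> & ->).
  assert (Heps2 : eps * eps = 1) by (destruct Heps as [-> | ->]; ring).
  assert (0 < / s1) by (apply Rinv_0_lt_compat; lra).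
  assert (0 < / s2) by (apply Rinv_0_lt_compat; lra).
  repeat split.
  - replace (_ * _ * _) with ((eps * eps) * (sgnb d1 * sgnb d1) * (s1 * s2 * P * (s2 / s1 * Q)))
      by ring.
    rewrite Heps2, sgnb_sqr. repeat apply Rmult_lt_0_compat; lra.
  - replace (_ * _ * _) with ((eps * eps) * (sgnb d1 * sgnb d1) * (sgnb d2 * sgnb d2)
      * (s1 * s2 * P * (s1 / s2 * Q))) by ring.
    rewrite Heps2, !sgnb_sqr. repeat apply Rmult_lt_0_compat; lra.
  - replace (_ * _ * _) with ((eps * eps) * (sgnb d1 * sgnb d1) * (s1 * s2 * P)) by ring.
    rewrite Heps2, sgnb_sqr. repeat apply Rmult_lt_0_compat; lra.
Qed.

End DecompositionInvariants.

Lemma scaling_exists A B C D P Q : 0 < A -> 0 < B -> 0 < P -> 0 < Q ->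
  P * P = A * D -> Q * Q = B * C ->
  exists s1 s2, 0 < s1 /\ 0 < s2 /\
    A = s1 * s2 * P /\ B = s1 / s2 * Q /\ C = s2 / s1 * Q /\ D = P / s1 / s2.
Proof.
  intros HA HB HP HQ HAD HBC.
  assert (Hr : 0 < A / P * (B / Q)).
  { apply Rmult_lt_0_compat; apply Rdiv_lt_0_compat; assumption. }
  set (s1 := sqrt (A / P * (B / Q))).
  assert (Hs1 : 0 < s1) by (apply sqrt_lt_R0; exact Hr).
  assert (Es1 : s1 * s1 = A / P * (B / Q)) by (apply sqrt_sqrt; lra).
  clearbody s1.
  exists s1, (A / P / s1).
  repeat split.
  - exact Hs1.
  - apply Rdiv_lt_0_compat; [apply Rdiv_lt_0_compat |]; lra.
  - field; repeat split; lra.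
  - replace (s1 / (A / P / s1) * Q) with (s1 * s1 * P * Q / A) by (field; repeat split; lra).
    rewrite Es1. field; repeat split; lra.
  - replace (A / P / s1 / s1 * Q) with (A * Q / (P * (s1 * s1))) by (field; repeat split; lra).
    rewrite Es1. apply Rmult_eq_reg_l with B; [| lra].
    rewrite <- HBC. field; repeat split; lra.
  - replace (P / s1 / (A / P / s1)) with (P * P / A) by (field; repeat split; lra).
    rewrite HAD. field; repeat split; lra.
Qed.

Lemma sign_pattern a b c d : 0 < a * d * (b * c) ->
  exists e d1 d2,
    a = sgnb e * sgnb d1 * Rabs a /\ b = sgnb e * sgnb d1 * sgnb d2 * Rabs b /\
    c = sgnb e * Rabs c /\ d = sgnb e * sgnb d2 * Rabs d.
Proof.
  intros H.
  assert (a <> 0 /\ c <> 0 /\ d <> 0) as (Ha & Hc & Hd).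
  { repeat split; intros ->; lra. }
  destruct (exists_sgnb c Hc) as [e He].
  destruct (exists_sgnb (a * sgnb e)) as [d1 H1].
  { apply Rmult_integral_contrapositive; split; [exact Ha | destruct e; cbn; lra]. }
  destruct (exists_sgnb (d * sgnb e)) as [d2 H2].
  { apply Rmult_integral_contrapositive; split; [exact Hd | destruct e; cbn; lra]. }
  assert (Hb : 0 < b * (sgnb e * sgnb d1 * sgnb d2)).
  { apply (pos_of_mul_pos _ (a * sgnb e * sgnb d1 * (c * sgnb e) * (d * sgnb e * sgnb d2))).
    - replace (b * _ * _) with (a * d * (b * c) * ((sgnb e * sgnb e) * (sgnb e * sgnb e)
        * (sgnb d1 * sgnb d1) * (sgnb d2 * sgnb d2))) by ring.
      rewrite !sgnb_sqr. lra.
    - apply Rmult_lt_0_compat; [apply Rmult_lt_0_compat |]; assumption. }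
  exists e, d1, d2.
  destruct e, d1, d2; cbn in *; repeat split; split_Rabs; lra.
Qed.

Lemma decomposition_exists a b c d : a * d - b * c = 1 -> 0 < a * d * (b * c) ->
  exists y1 y2 d1 d2 v eps, decomposition (M2 a b c d) y1 y2 d1 d2 v eps.
Proof.
  intros Hdet Hpos.
  assert (a <> 0 /\ b <> 0 /\ c <> 0 /\ d <> 0) as (Ha0 & Hb0 & Hc0 & Hd0).
  { repeat split; intros ->; lra. }
  destruct (sign_pattern a b c d Hpos) as (e & d1 & d2 & Ea & Eb & Ec & Ed).
  set (P := sqrt (Rabs a * Rabs d)). set (Q := sqrt (Rabs b * Rabs c)).
  assert (HP : 0 < P) by (apply sqrt_lt_R0, Rmult_lt_0_compat; apply Rabs_pos_lt; assumption).
  assert (HQ : 0 < Q) by (apply sqrt_lt_R0, Rmult_lt_0_compat; apply Rabs_pos_lt; assumption).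
  assert (EP : P * P = Rabs a * Rabs d)
    by (apply sqrt_sqrt, Rmult_le_pos; apply Rabs_pos).
  assert (EQ : Q * Q = Rabs b * Rabs c)
    by (apply sqrt_sqrt, Rmult_le_pos; apply Rabs_pos).
  assert (Hsq : sgnb d1 * sgnb d2 * (P * P - Q * Q) = 1).
  { rewrite Ea, Eb, Ec, Ed in Hdet.
    rewrite EP, EQ, <- Hdet. destruct e; cbn; ring. }
  destruct (exists_twist d1 d2 P Q HP HQ Hsq) as (v & Hv & HPv & HQv).
  destruct (scaling_exists (Rabs a) (Rabs b) (Rabs c) (Rabs d) P Q)
    as (s1 & s2 & Hs1 & Hs2 & Aa & Ab & Ac & Ad); try assumption;
    try (apply Rabs_pos_lt; assumption).
  exists (s1 * s1), (s2 * s2), d1, d2, v, (sgnb e).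
  repeat split; try nra.
  - destruct e; cbn; auto.
  - rewrite decomposition_product, !sqrt_square, HPv, HQv by lra.
    rewrite <- Aa, <- Ab, <- Ac, <- Ad.
    f_equal; assumption.
Qed.

Lemma decomposition_unique a b c d y1 y2 d1 d2 v eps y1' y2' d1' d2' v' eps' :
  decomposition (M2 a b c d) y1 y2 d1 d2 v eps ->
  decomposition (M2 a b c d) y1' y2' d1' d2' v' eps' ->
  (y1, y2, d1, d2, v, eps) = (y1', y2', d1', d2', v', eps').
Proof.
  intros H H'.
  destruct (decomposition_signs H) as (Hac & Hab & Ha).
  destruct (decomposition_signs H') as (Hac' & Hab' & Ha').
  rewrite (decomposition_y1 H), (decomposition_y1 H'), (decomposition_y2 H),
    (decomposition_y2 H'), (decomposition_v H), (decomposition_v H').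
  rewrite <- (sgnb_unique _ _ _ Hac Hac') in Ha' |- *.
  rewrite (sgnb_unique _ _ _ Hab Hab').
  destruct H as (_ & _ & _ & Heps & _). destruct H' as (_ & _ & _ & Heps' & _).
  now rewrite (unit_sign_unique _ _ _ Heps Heps' Ha Ha').
Qed.

Theorem lemma4p3 (a b c d : R) (hdet : SL2 (M2 a b c d)) (hns : ~ in_s (M2 a b c d)) :
  (in_S (M2 a b c d) <-> Rabs (a * d) + Rabs (b * c) = 1) /\
  (~ in_S (M2 a b c d) ->
     (exists! p : R * R * bool * bool * R * R,
        match p with (y1, y2, d1, d2, v, eps) =>
          decomposition (M2 a b c d) y1 y2 d1 d2 v eps end) /\
     (forall (y1 y2 : R) (d1 d2 : bool) (v eps : R),
        decomposition (M2 a b c d) y1 y2 d1 d2 v eps ->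
        y1 = sqrt (Rabs (a * b / (c * d))) /\
        y2 = sqrt (Rabs (a * c / (b * d))) /\
        v = ln (sqrt (Rabs (a * d)) + sqrt (Rabs (c * b))) /\
        (0 < a * b -> 0 < a * c -> 0 < a * d -> (d1, d2) = (false, false)) /\
        (a * b < 0 -> a * c < 0 -> 0 < a * d -> (d1, d2) = (true, true)) /\
        (0 < a * b -> a * c < 0 -> a * d < 0 -> (d1, d2) = (true, false)) /\
        (a * b < 0 -> 0 < a * c -> a * d < 0 -> (d1, d2) = (false, true)))).
Proof.
  unfold SL2, det2 in hdet; unfold in_s in hns; cbn in hdet, hns.
  assert (Hnz : a * d * (b * c) <> 0) by (intros H; apply hns; rewrite <- H; ring).
  rewrite in_S_iff by assumption.
  split.
  - rewrite <- Rabs_add_Rabs_eq_iff, hdet, Rabs_R1 by exact Hnz. reflexivity.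
  - intros Hnot_neg.
    assert (Hpos : 0 < a * d * (b * c)) by lra.
    split.
    + destruct (decomposition_exists a b c d hdet Hpos) as (y1 & y2 & d1 & d2 & v & eps & H).
      exists (y1, y2, d1, d2, v, eps). split; [exact H |].
      intros [[[[[y1' y2'] d1'] d2'] v'] eps'] H'. eapply decomposition_unique; eassumption.
    + intros y1 y2 d1 d2 v eps H.
      destruct (decomposition_signs H) as (Hac & Hab & _).
      split; [exact (decomposition_y1 H) |].
      split; [exact (decomposition_y2 H) |].
      split; [exact (decomposition_v H) |].
      repeat split; intros; f_equal;
        first [ eapply sgnb_false_of_pos; eassumption | eapply sgnb_true_of_neg; eassumption ].
Qed.
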